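(* Let $d\ge 2$ and $k_1,k_2\in\{2,\dots,d\}$. Let $C_1\subset\mathbb{S}^{d-1}$ be a $k_1$-tangent cap and $C_2\subset\mathbb{S}^{d-1}$ a $k_2$-tangent cap, and let $\mathcal O_1,\mathcal O_2$ be their orbits under the group generated by the reflections in the coordinate hyperplanes. Suppose $\mathcal O_1\ne\mathcal O_2$ and that the caps in $\mathcal O_1\cup\mathcal O_2$ form a packing (their interiors are pairwise disjoint). Then $$k_1+k_2-d\le\sqrt{(k_1-1)(k_2-1)}-1.$$
   Context: $\mathbb{S}^{d-1}$ is the unit sphere of $\mathbb{E}^d$ centred at the origin, with the standard orthonormal basis $\boldsymbol e_1,\dots,\boldsymbol e_d$. The coordinate greatspheres are $G_i=\{\boldsymbol x\in\mathbb{S}^{d-1}\mid x_i=0\}$. A spherical cap is a closed set $\{\boldsymbol x\in\mathbb{S}^{d-1}\mid \text{spherical distance from }\boldsymbol x\text{ to }\boldsymbol c\le r\}$ with centre $\boldsymbol c\in\mathbb{S}^{d-1}$ and spherical radius $r\in(0,\pi/2)$. A cap is tangent to $G_i$ if it meets $G_i$ only at boundary points of the cap (equivalently, its radius equals the angular distance from its centre to the hyperplane $x_i=0$). For $k\in\{2,\dots,d\}$, a $k$-tangent cap is a spherical cap whose centre lies on the intersection of $d-k$ of the coordinate greatspheres and which is tangent to each of the remaining $k$ coordinate greatspheres. *)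

From HB Require Import structures.
From mathcomp Require Import all_boot all_order all_algebra.
From mathcomp Require Import all_classical all_reals all_analysis.
Set Implicit Arguments. Unset Strict Implicit. Unset Printing Implicit Defensive.
Import Order.TTheory GRing.Theory Num.Theory.
Local Open Scope ring_scope.
Local Open Scope classical_set_scope.

Section Defs.
Variables (R : realType) (d : nat).
Implicit Types (x y c : 'rV[R]_d) (r : R).

Definition dotp x y : R := \sum_(i < d) x 0 i * y 0 i.

Definition sphere : set 'rV[R]_d := [set x | dotp x x = 1].

Definition sdist x y : R := acos (dotp x y).

Definition cap c r : set 'rV[R]_d := [set x | sphere x /\ sdist x c <= r].

Definition is_cap c r : Prop := sphere c /\ 0 < r /\ r < pi / 2.

(* angular distance from a point c of the sphere to the hyperplane x_i = 0 *)
Definition dist_to_G (i : 'I_d) c : R := asin `|c 0 i|.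

Definition tangent_to_G (i : 'I_d) c r : Prop := r = dist_to_G i c.

Definition k_tangent_cap (k : nat) c r : Prop :=
  is_cap c r /\
  exists S : {set 'I_d}, #|S| = k /\
    (forall i, i \notin S -> c 0 i = 0) /\
    (forall i, i \in S -> tangent_to_G i c r).

Definition reflect_by (s : {set 'I_d}) x : 'rV[R]_d :=
  \row_i (if i \in s then - x 0 i else x 0 i).

(* orbit of a set under the group generated by the coordinate reflections
   (this group consists exactly of the maps reflect_by s) *)
Definition refl_orbit (C : set 'rV[R]_d) : set (set 'rV[R]_d) :=
  [set D | exists s : {set 'I_d}, D = reflect_by s @` C].

Definition sph_interior (A : set 'rV[R]_d) : set 'rV[R]_d :=
  [set x | A x /\ exists e : R, 0 < e /\
     forall y, sphere y -> dotp (y - x) (y - x) < e -> A y].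

Definition packing (F : set (set 'rV[R]_d)) : Prop :=
  forall A B, F A -> F B -> A <> B ->
    sph_interior A `&` sph_interior B = set0.

End Defs.

From HB Require Import structures.
From mathcomp Require Import all_boot all_order all_algebra.
From mathcomp Require Import all_classical all_reals all_analysis.
From mathcomp Require Import ring lra.
Set Implicit Arguments. Unset Strict Implicit. Unset Printing Implicit Defensive.
Import Order.TTheory GRing.Theory Num.Theory.
Local Open Scope ring_scope.
Local Open Scope classical_set_scope.

(* A k-tangent cap of radius r has centre with k coordinates of absolute value
   sin r and the others 0, so k sin^2 r = 1. Reflecting the second centre so
   that its signs agree with those of the first gives a member of the second
   orbit whose centre has inner product m sin r1 sin r2 with the first centre,
   where m >= k1 + k2 - d counts the common support. The two caps are distinct
   members of the packing, so this inner product is at most cos (r1 + r2);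
   squaring and multiplying by k1 k2 gives (m + 1)^2 <= (k1 - 1)(k2 - 1). *)

Section RealAlgebra.
Variable R : realFieldType.

Lemma overlap_gap (p1 q1 p2 q2 c : R) :
  0 < p1 -> 0 < q1 -> 0 < p2 -> 0 < q2 ->
  p1 ^+ 2 + q1 ^+ 2 = 1 -> p2 ^+ 2 + q2 ^+ 2 = 1 ->
  p1 * p2 - q1 * q2 < c ->
  0 < q2 + q1 * c /\
  p1 ^+ 2 * (q1 ^+ 2 + q2 ^+ 2 + 2 * q1 * q2 * c) < (q2 + q1 * c) ^+ 2.
Proof.
move=> p1_gt0 q1_gt0 p2_gt0 q2_gt0 pq1 pq2 c_gt.
have p1p2_gt0 : 0 < p1 * p2 by rewrite mulr_gt0.
split.
  have : 0 < q1 * (c - (p1 * p2 - q1 * q2)) by rewrite mulr_gt0 ?subr_gt0.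
  have : 0 < q2 * p1 ^+ 2 + q1 * (p1 * p2) by rewrite addr_gt0 ?mulr_gt0 ?exprn_gt0.
  nra.
have gap : p1 ^+ 2 * p2 ^+ 2 < (c + q1 * q2) ^+ 2.
  by rewrite -exprMn ltr_pXn2r ?nnegrE //; lra.
have -> : (q2 + q1 * c) ^+ 2 = p1 ^+ 2 * (q1 ^+ 2 + q2 ^+ 2 + 2 * q1 * q2 * c)
    + q1 ^+ 2 * ((c + q1 * q2) ^+ 2 - p1 ^+ 2 * p2 ^+ 2).
  have -> : p1 ^+ 2 = 1 - q1 ^+ 2 by lra.
  have -> : p2 ^+ 2 = 1 - q2 ^+ 2 by lra.
  ring.
by rewrite ltrDl mulr_gt0 ?exprn_gt0 ?subr_gt0.
Qed.

Lemma overlap_count_bound (K1 K2 M p1 q1 p2 q2 : R) :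
  0 <= p1 -> 0 <= p2 -> 0 <= q1 -> 0 <= q2 -> 0 <= M ->
  p1 ^+ 2 + q1 ^+ 2 = 1 -> p2 ^+ 2 + q2 ^+ 2 = 1 ->
  K1 * q1 ^+ 2 = 1 -> K2 * q2 ^+ 2 = 1 ->
  M * (q1 * q2) <= p1 * p2 - q1 * q2 ->
  (M + 1) ^+ 2 <= (K1 - 1) * (K2 - 1).
Proof.
move=> p1_ge0 p2_ge0 q1_ge0 q2_ge0 M_ge0 pq1 pq2 Kq1 Kq2 sep.
have K1_ge0 : 0 <= K1.
  rewrite leNgt; apply/negP => /ltW K1_le0.
  by have := mulr_le0_ge0 K1_le0 (sqr_ge0 q1); rewrite Kq1 ler10.
have K2_ge0 : 0 <= K2.
  rewrite leNgt; apply/negP => /ltW K2_le0.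
  by have := mulr_le0_ge0 K2_le0 (sqr_ge0 q2); rewrite Kq2 ler10.
have sq : ((M + 1) * (q1 * q2)) ^+ 2 <= (p1 * p2) ^+ 2.
  by rewrite ler_pXn2r ?nnegrE ?mulr_ge0 ?addr_ge0 //; lra.
have eK1 : K1 - 1 = K1 * p1 ^+ 2.
  have -> : p1 ^+ 2 = 1 - q1 ^+ 2 by lra.
  by rewrite mulrBr mulr1 Kq1.
have eK2 : K2 - 1 = K2 * p2 ^+ 2.
  have -> : p2 ^+ 2 = 1 - q2 ^+ 2 by lra.
  by rewrite mulrBr mulr1 Kq2.
have -> : (M + 1) ^+ 2 = ((M + 1) * (q1 * q2)) ^+ 2 * (K1 * K2).
  rewrite (_ : _ * (K1 * K2) = (M + 1) ^+ 2 * (K1 * q1 ^+ 2) * (K2 * q2 ^+ 2)).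
    by rewrite Kq1 Kq2 !mulr1.
  by ring.
rewrite eK1 eK2 (_ : K1 * p1 ^+ 2 * (K2 * p2 ^+ 2) = (p1 * p2) ^+ 2 * (K1 * K2)).
  by rewrite ler_wpM2r ?mulr_ge0.
by ring.
Qed.

End RealAlgebra.

Lemma lt_div_sqrt (R : rcfType) (p u N : R) :
  0 <= p -> 0 < N -> 0 < u -> p ^+ 2 * N < u ^+ 2 -> p < u / Num.sqrt N.
Proof.
move=> p_ge0 N_gt0 u_gt0 lt_sq; rewrite ltr_pdivlMr ?sqrtr_gt0 //.
rewrite -(ltr_pXn2r (_ : (0 < 2)%N)) ?nnegrE ?mulr_ge0 ?sqrtr_ge0 ?(ltW u_gt0) //.
by rewrite exprMn sqr_sqrtr ?ltW.
Qed.

Lemma card_setI_lower_bound (T : finType) (A B : {set T}) :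
  (#|A| + #|B| <= #|A :&: B| + #|T|)%N.
Proof. by rewrite -cardsUI addnC leq_add2l max_card. Qed.

Lemma sumr_support_const (V : nmodType) (I : finType) (S : {set I})
    (f : I -> V) (t : V) :
  (forall i, i \in S -> f i = t) -> (forall i, i \notin S -> f i = 0) ->
  \sum_i f i = t *+ #|S|.
Proof.
move=> onS offS; rewrite (bigID (mem S)) /= [X in _ + X]big1 ?addr0; last first.
  by move=> i /offS.
by rewrite (eq_bigr (fun=> t)) ?sumr_const.
Qed.

Section Sphere.
Variables (R : realType) (d : nat).
Implicit Types (x y u a b c : 'rV[R]_d) (s t : {set 'I_d}).

Lemma dotpC x y : dotp x y = dotp y x.
Proof. by apply: eq_bigr => i _; rewrite mulrC. Qed.

Lemma dotpDl x y z : dotp (x + y) z = dotp x z + dotp y z.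
Proof. by rewrite /dotp -big_split; apply: eq_bigr => i _; rewrite !mxE mulrDl. Qed.

Lemma dotpZl (k : R) x y : dotp (k *: x) y = k * dotp x y.
Proof. by rewrite /dotp mulr_sumr; apply: eq_bigr => i _; rewrite !mxE mulrA. Qed.

Lemma dotpBl x y z : dotp (x - y) z = dotp x z - dotp y z.
Proof. by rewrite dotpDl -scaleN1r dotpZl mulN1r. Qed.

Lemma dotpBr x y z : dotp z (x - y) = dotp z x - dotp z y.
Proof. by rewrite !(dotpC z) dotpBl. Qed.

Lemma dotpZr (k : R) x y : dotp y (k *: x) = k * dotp y x.
Proof. by rewrite !(dotpC y) dotpZl. Qed.

Lemma dotpp_ge0 x : 0 <= dotp x x.
Proof. by apply: sumr_ge0 => i _; rewrite -expr2 sqr_ge0. Qed.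

Lemma coord_sqr_le_dotpp x i : x 0 i ^+ 2 <= dotp x x.
Proof.
rewrite /dotp (bigD1 i) //= expr2 lerDl.
by apply: sumr_ge0 => j _; rewrite -expr2 sqr_ge0.
Qed.

Lemma dotp_sqr_le u a : sphere a -> dotp u a ^+ 2 <= dotp u u.
Proof.
rewrite /sphere /= => a1; have := dotpp_ge0 (u - dotp u a *: a).
by rewrite dotpBl !dotpBr !dotpZl !dotpZr a1 (dotpC a u); lra.
Qed.

Lemma sphere_dotp_le1 x y : sphere x -> sphere y -> dotp x y <= 1.
Proof.
move=> x1 y1; have := dotp_sqr_le x y1; rewrite x1 => h.
by rewrite leNgt; apply/negP => gt1; nra.
Qed.

Lemma sphere_normalize y : 0 < dotp y y ->
  sphere ((Num.sqrt (dotp y y))^-1 *: y).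
Proof.
move=> y_gt0; rewrite /sphere /= dotpZl dotpZr mulrA -expr2 exprVn sqr_sqrtr ?ltW //.
by rewrite mulVf ?gt_eqF.
Qed.

Lemma reflect_byK s : involutive (@reflect_by R d s).
Proof. by move=> x; apply/rowP => i; rewrite !mxE; case: (i \in s); rewrite ?opprK. Qed.

Lemma reflect_by0 x : reflect_by finset.set0 x = x.
Proof. by apply/rowP => i; rewrite !mxE inE. Qed.

Lemma reflect_by_comp s t x :
  reflect_by s (reflect_by t x) = reflect_by ((s :\: t) :|: (t :\: s)) x.
Proof.
by apply/rowP => i; rewrite !mxE !inE; case: (i \in s); case: (i \in t); rewrite ?opprK.
Qed.

Lemma dotp_reflect_by s x y : dotp (reflect_by s x) y = dotp x (reflect_by s y).
Proof. by apply: eq_bigr => i _; rewrite !mxE; case: ifP => _; rewrite ?mulNr ?mulrN. Qed.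

Lemma sphere_reflect_by s x : sphere x -> sphere (reflect_by s x).
Proof. by rewrite /sphere /= dotp_reflect_by reflect_byK. Qed.

Lemma image_reflect_by_cap s c r :
  reflect_by s @` cap c r = cap (reflect_by s c) r.
Proof.
have capE x : cap (reflect_by s c) r (reflect_by s x) = cap c r x.
  by rewrite /cap /sphere /sdist /= !dotp_reflect_by !reflect_byK.
apply/seteqP; split => [_ [x cx <-] | y]; first by rewrite capE.
rewrite -{1}(reflect_byK s y) capE => cy.
by exists (reflect_by s y); rewrite ?reflect_byK.
Qed.

Lemma refl_orbit_refl (C : set 'rV[R]_d) : refl_orbit C C.
Proof.
by exists finset.set0; rewrite (eq_imagel (fun x _ => reflect_by0 x)) image_id.
Qed.

Lemma refl_orbit_image_sub s (C : set 'rV[R]_d) :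
  refl_orbit (reflect_by s @` C) `<=` refl_orbit C.
Proof.
move=> _ [t ->]; exists ((t :\: s) :|: (s :\: t)); rewrite image_comp.
by apply: eq_imagel => x _; rewrite /= reflect_by_comp.
Qed.

Lemma refl_orbit_image s (C : set 'rV[R]_d) :
  refl_orbit (reflect_by s @` C) = refl_orbit C.
Proof.
apply/seteqP; split; first exact: refl_orbit_image_sub.
rewrite -{1}(image_id C) -(eq_imagel (fun x _ => reflect_byK s x)) -image_comp.
exact: refl_orbit_image_sub.
Qed.

Lemma cos_sin_gt0 (r : R) : 0 < r < pi / 2 -> 0 < cos r /\ 0 < sin r.
Proof.
move=> r_itv; split; last exact: sin_gt0_pihalf.
apply: cos_gt0_pihalf; case/andP: r_itv => r_gt0 ->; rewrite andbT.
by rewrite (lt_trans _ r_gt0) // oppr_lt0 divr_gt0 ?pi_gt0.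
Qed.

Lemma ltpihalf_lepi (r : R) : 0 < r < pi / 2 -> 0 <= r <= pi.
Proof.
case/andP => /ltW -> /ltW /le_trans; apply.
by rewrite ler_pdivrMr // ler_peMr ?ler1n // pi_ge0.
Qed.

Lemma acos_le (t r : R) : 0 <= r <= pi -> cos r <= t <= 1 -> acos t <= r.
Proof.
move=> /andP[r_ge0 r_lepi] /andP[cos_le t_le1].
have t_itv : -1 <= t <= 1 by rewrite t_le1 andbT (le_trans (cos_geN1 r)).
rewrite leNgt; apply/negP => r_lt.
have : cos (acos t) < cos r by rewrite ltr_cos // in_itv /= ?acos_ge0 ?acos_lepi ?r_ge0.
by rewrite acosK ?in_itv // ltNge cos_le.
Qed.

Lemma cap_interior a x r : sphere a -> sphere x -> 0 <= r <= pi ->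
  cos r < dotp x a -> sph_interior (cap a r) x.
Proof.
move=> a1 x1 r_itv x_in.
have capP y : sphere y -> cos r < dotp y a -> cap a r y.
  by move=> y1 y_in; split => //; apply: acos_le; rewrite // (ltW y_in) sphere_dotp_le1.
split; first exact: capP.
set e := dotp x a - cos r.
have e_gt0 : 0 < e by rewrite subr_gt0.
exists (e ^+ 2); split; first by rewrite exprn_gt0.
move=> y y1 close; apply: capP => //.
have := dotp_sqr_le (y - x) a1; rewrite dotpBl => cs.
have : - e < dotp y a - dotp x a by nra.
by rewrite /e; lra.
Qed.

Lemma cap_interiors_meet a b r1 r2 : sphere a -> sphere b ->
  0 < r1 < pi / 2 -> 0 < r2 < pi / 2 -> cos (r1 + r2) < dotp a b ->
  exists x, sph_interior (cap a r1) x /\ sph_interior (cap b r2) x.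
Proof.
move=> a1 b1 r1_itv r2_itv; rewrite cosD => ab_gt.
have [p1_gt0 q1_gt0] := cos_sin_gt0 r1_itv.
have [p2_gt0 q2_gt0] := cos_sin_gt0 r2_itv.
(* When a and b are at angle exactly r1 + r2, y points to the tangency point
   of the two caps. *)
set y := sin r2 *: a + sin r1 *: b.
have ya : dotp y a = sin r2 + sin r1 * dotp a b.
  by rewrite dotpDl !dotpZl a1 (dotpC b a) mulr1.
have yb : dotp y b = sin r1 + sin r2 * dotp a b.
  by rewrite dotpDl !dotpZl b1 mulr1 addrC.
have yy : dotp y y = sin r1 ^+ 2 + sin r2 ^+ 2 + 2 * sin r1 * sin r2 * dotp a b.
  by rewrite {1}/y dotpDl !dotpZl (dotpC a y) (dotpC b y) ya yb; ring.
have [ya_gt0 ya_gap] := overlap_gap p1_gt0 q1_gt0 p2_gt0 q2_gt0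
  (cos2Dsin2 r1) (cos2Dsin2 r2) ab_gt.
have ba_gt : cos r2 * cos r1 - sin r2 * sin r1 < dotp a b.
  by rewrite mulrC [sin r2 * _]mulrC.
have [yb_gt0 yb_gap] := overlap_gap p2_gt0 q2_gt0 p1_gt0 q1_gt0
  (cos2Dsin2 r2) (cos2Dsin2 r1) ba_gt.
rewrite -ya in ya_gt0; rewrite -yb in yb_gt0.
have y_gt0 : 0 < dotp y y.
  by apply: lt_le_trans (dotp_sqr_le y a1); rewrite exprn_gt0.
set x := (Num.sqrt (dotp y y))^-1 *: y.
have x1 : sphere x := sphere_normalize y_gt0.
have xE z : dotp x z = dotp y z / Num.sqrt (dotp y y) by rewrite dotpZl mulrC.
exists x; split; apply: cap_interior; rewrite ?ltpihalf_lepi ?xE //;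
  apply: lt_div_sqrt; rewrite ?ltW //.
- by rewrite ya yy.
- by rewrite yb yy (addrC (sin r1 ^+ 2)) [2 * sin r1 * _]mulrAC.
Qed.

Lemma disjoint_cap_interiors_dotp_le a b r1 r2 : sphere a -> sphere b ->
  0 < r1 < pi / 2 -> 0 < r2 < pi / 2 ->
  sph_interior (cap a r1) `&` sph_interior (cap b r2) = set0 ->
  dotp a b <= cos (r1 + r2).
Proof.
move=> a1 b1 r1_itv r2_itv disj; rewrite leNgt; apply/negP => ab_gt.
have [x [in1 in2]] := cap_interiors_meet a1 b1 r1_itv r2_itv ab_gt.
by have : (sph_interior (cap a r1) `&` sph_interior (cap b r2)) x by [];
  rewrite disj.
Qed.

Lemma k_tangent_capP k c r : k_tangent_cap k c r ->
  [/\ sphere c, 0 < r < pi / 2 & exists S : {set 'I_d}, [/\ #|S| = k,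
    (forall i, i \notin S -> c 0 i = 0),
    (forall i, i \in S -> `|c 0 i| = sin r) & k%:R * sin r ^+ 2 = 1]].
Proof.
move=> [[c1 [r_gt0 r_lt]] [S [cardS [off tang]]]].
have on i : i \in S -> `|c 0 i| = sin r.
  move=> iS; rewrite (tang i iS) /dist_to_G asinK // in_itv /=.
  have := coord_sqr_le_dotpp c i; rewrite c1 -real_normK ?num_real // => sq_le1.
  by apply/andP; split; nra.
split => //; first by rewrite r_gt0.
exists S; split => //.
have sq_on i : i \in S -> c 0 i * c 0 i = sin r ^+ 2.
  by move=> /on <-; rewrite -expr2 real_normK ?num_real.
have sq_off i : i \notin S -> c 0 i * c 0 i = 0 by move=> /off ->; rewrite mul0r.
by rewrite -cardS -[RHS]c1 /dotp (sumr_support_const sq_on sq_off) mulr_natl.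
Qed.

Lemma dotp_sign_aligned x y :
  dotp x (reflect_by [set i | x 0 i * y 0 i < 0]%SET y) = \sum_i `|x 0 i * y 0 i|.
Proof.
apply: eq_bigr => i _; rewrite !mxE inE.
case: ltP => [/ltr0_norm | /ger0_norm] ->; by rewrite ?mulrN.
Qed.

Lemma tangent_centres_dotp (S1 S2 : {set 'I_d}) c1 c2 (t1 t2 : R) :
  (forall i, i \notin S1 -> c1 0 i = 0) -> (forall i, i \in S1 -> `|c1 0 i| = t1) ->
  (forall i, i \notin S2 -> c2 0 i = 0) -> (forall i, i \in S2 -> `|c2 0 i| = t2) ->
  dotp c1 (reflect_by [set i | c1 0 i * c2 0 i < 0]%SET c2) =
    #|S1 :&: S2|%:R * (t1 * t2).
Proof.
move=> off1 on1 off2 on2; rewrite dotp_sign_aligned mulr_natl.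
apply: sumr_support_const => i; rewrite inE.
  by case/andP => /on1 <- /on2 <-; rewrite normrM.
by rewrite negb_and => /orP[/off1 | /off2] ->; rewrite ?mul0r ?mulr0 normr0.
Qed.

End Sphere.

Theorem lemma5 (R : realType) (d k1 k2 : nat) (c1 c2 : 'rV[R]_d) (r1 r2 : R) :
  (2 <= d)%N -> (2 <= k1 <= d)%N -> (2 <= k2 <= d)%N ->
  k_tangent_cap k1 c1 r1 -> k_tangent_cap k2 c2 r2 ->
  refl_orbit (cap c1 r1) <> refl_orbit (cap c2 r2) ->
  packing (refl_orbit (cap c1 r1) `|` refl_orbit (cap c2 r2)) ->
  (k1%:R + k2%:R - d%:R : R) <= Num.sqrt ((k1%:R - 1) * (k2%:R - 1) : R) - 1.
Proof.
move=> _ _ _ tan1 tan2 orbits_neq pack.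
have [c1_sph r1_itv [S1 [cardS1 off1 on1 k1_sin]]] := k_tangent_capP tan1.
have [c2_sph r2_itv [S2 [cardS2 off2 on2 k2_sin]]] := k_tangent_capP tan2.
set s := [set i | c1 0 i * c2 0 i < 0]%SET.
have caps_neq : cap c1 r1 <> cap (reflect_by s c2) r2.
  rewrite -image_reflect_by_cap => caps_eq; apply: orbits_neq.
  by rewrite caps_eq refl_orbit_image.
have sep : dotp c1 (reflect_by s c2) <= cos (r1 + r2).
  apply: (disjoint_cap_interiors_dotp_le c1_sph (sphere_reflect_by s c2_sph) r1_itv r2_itv).
  apply: pack caps_neq; first by left; exact: refl_orbit_refl.
  by right; exists s; rewrite image_reflect_by_cap.
rewrite (tangent_centres_dotp off1 on1 off2 on2) cosD in sep.
have [p1_gt0 q1_gt0] := cos_sin_gt0 r1_itv.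
have [p2_gt0 q2_gt0] := cos_sin_gt0 r2_itv.
set m := #|S1 :&: S2|.
have count := overlap_count_bound (ltW p1_gt0) (ltW p2_gt0) (ltW q1_gt0)
  (ltW q2_gt0) (ler0n _ m) (cos2Dsin2 r1) (cos2Dsin2 r2) k1_sin k2_sin sep.
have m_ge : k1%:R + k2%:R - d%:R <= m%:R :> R.
  have := card_setI_lower_bound S1 S2; rewrite card_ord cardS1 cardS2.
  by rewrite -(ler_nat R) !natrD; lra.
have : m%:R + 1 <= Num.sqrt ((k1%:R - 1) * (k2%:R - 1)) :> R.
  by rewrite -[_ + 1]ger0_norm ?addr_ge0 // -sqrtr_sqr ler_wsqrtr.
lra.
Qed.
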